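(* For a threshold graph $G$ with $n$ vertices, the matching number (maximum number of edges in a matching) satisfies $$\nu(G)=\left\lfloor\frac{n-h(\mathrm{seq}(G))}{2}\right\rfloor.$$
   Context: A threshold graph on $n\ge1$ vertices is built from a base vertex $v_0$ by successively adding $v_1,\dots,v_{n-1}$, each either isolated (adjacent to no earlier vertex) or dominating (adjacent to all earlier vertices); its creation sequence $\mathrm{seq}(G)=s_1\cdots s_{n-1}$ has $s_i=1$ if $v_i$ is dominating and $s_i=0$ otherwise. For a binary string $s=s_1\cdots s_m$ and $0\le k\le m$, the $k$-th tail is $s_{m-k+1}\cdots s_m$ (empty for $k=0$); $z_k(s)$, $u_k(s)$ are the numbers of zeros and ones in it, and $h(s)=\max_{0\le k\le m}\{z_k(s)-u_k(s)\}$. *)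

From mathcomp Require Import all_boot all_order all_algebra.
Set Implicit Arguments. Unset Strict Implicit. Unset Printing Implicit Defensive.
Import Order.TTheory GRing.Theory Num.Theory.
Local Open Scope ring_scope.

(* Threshold graph with creation sequence s = s_1 ... s_{n-1} on vertices
   v_0,...,v_{n-1} represented by 'I_n.  For i < j, v_i v_j is an edge iff
   v_j is dominating, i.e. s_j = true (s_j = nth false s (j-1)). *)
Definition tg_adj (n : nat) (s : seq bool) : rel 'I_n :=
  fun i j => (i != j) && nth false s (maxn i j).-1.

Definition is_matching (T : finType) (e : rel T) (M : {set {set T}}) : bool :=
  [forall E in M, exists u, exists v, [&& u != v, e u v & E == [set u; v]]] &&
  [forall E in M, forall F in M, (E != F) ==> [disjoint E & F]].

Definition matching_number (T : finType) (e : rel T) : nat :=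
  \max_(M : {set {set T}} | is_matching e M) #|M|.

Definition tail_k (s : seq bool) (k : nat) : seq bool := drop (size s - k)%N s.
Definition zk (s : seq bool) (k : nat) : nat := count negb (tail_k s k).
Definition uk (s : seq bool) (k : nat) : nat := count id (tail_k s k).

Definition hseq (s : seq bool) : int :=
  \big[Num.max/((zk s 0)%:Z - (uk s 0)%:Z)]_(k < (size s).+1)
     ((zk s k)%:Z - (uk s k)%:Z).

From mathcomp Require Import all_boot all_order all_algebra.
From mathcomp Require Import zify.
Import Order.TTheory GRing.Theory Num.Theory.
Set Implicit Arguments. Unset Strict Implicit. Unset Printing Implicit Defensive.
Local Open Scope ring_scope.

(* Let nu_k and h_k be the matching number and the value of h for the
   subgraph G_k induced by v_0, ..., v_k (creation sequence s_1 ... s_k).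
   We show 2 nu_k + h_k <= k + 1 <= 2 nu_k + h_k + 1 by induction on k.
   Appending an isolated vertex adds no edge and raises h by one.  Appending
   a dominating vertex lowers h by one unless h = 0; it raises nu by at most
   one, and by exactly one whenever some earlier vertex is left unmatched by
   a maximum matching, i.e. whenever 2 nu_k < k + 1. *)

Section Matchings.

Variable T : finType.
Implicit Types (e : rel T) (M : {set {set T}}) (A : {set T}).

Lemma matching_edge e M E : is_matching e M -> E \in M ->
  exists u v, [/\ u != v, e u v & E = [set u; v]].
Proof.
case/andP=> /forall_inP edgeM _ EM.
have /existsP[u /existsP[v /and3P[uv euv /eqP->]]] := edgeM E EM.
by exists u, v.
Qed.

Lemma matching_disjoint e M E F : is_matching e M -> E \in M -> F \in M ->
  E != F -> [disjoint E & F].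
Proof.
case/andP=> _ /forall_inP disjM EM FM.
by move/forall_inP/(_ F FM)/implyP: (disjM E EM).
Qed.

Lemma set0_matching e : is_matching e set0.
Proof. by apply/andP; split; apply/forall_inP => E; rewrite in_set0. Qed.

Lemma sub_matching e e' M : subrel e e' -> is_matching e M -> is_matching e' M.
Proof.
move=> ee' HM; apply/andP; split; last by case/andP: HM.
apply/forall_inP => E EM; have [u [v [uv euv ->]]] := matching_edge HM EM.
by apply/existsP; exists u; apply/existsP; exists v; rewrite uv ee' // eqxx.
Qed.

Lemma leq_matching_number e M : is_matching e M -> (#|M| <= matching_number e)%N.
Proof. exact: leq_bigmax_cond. Qed.

Lemma matching_numberP e :
  exists2 M, is_matching e M & #|M| = matching_number e.
Proof.
have [|M HM def_nu] := @eq_bigmax_cond _ (is_matching e) (fun M => #|M|).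
  by apply/card_gt0P; exists set0; apply: set0_matching.
by exists M; rewrite // /matching_number def_nu.
Qed.

Lemma matching_number_sub e e' :
  subrel e e' -> (matching_number e <= matching_number e')%N.
Proof.
move=> ee'; have [M HM <-] := matching_numberP e.
exact: leq_matching_number (sub_matching ee' HM).
Qed.

Lemma eq_matching_number e e' : e =2 e' -> matching_number e = matching_number e'.
Proof.
move=> ee'; apply/eqP.
by rewrite eqn_leq !matching_number_sub // => u v; rewrite ee'.
Qed.

Lemma card_cover_matching e M : is_matching e M -> #|cover M| = (2 * #|M|)%N.
Proof.
move=> HM; have /eqP <- : trivIset M.
  by apply/trivIsetP => E F EM FM; apply: matching_disjoint HM EM FM.
rewrite mulnC -sum_nat_const; apply: eq_bigr => E EM.
by have [u [v [uv _ ->]]] := matching_edge HM EM; rewrite cards2 uv.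
Qed.

Lemma matching_number_le_support e A :
  (forall u v, e u v -> (u \in A) && (v \in A)) ->
  (2 * matching_number e <= #|A|)%N.
Proof.
move=> eA; have [M HM <-] := matching_numberP e.
rewrite -(card_cover_matching HM); apply/subset_leq_card/subsetP => x.
case/bigcupP=> E EM; have [u [v [_ /eA/andP[uA vA] ->]]] := matching_edge HM EM.
by rewrite !inE => /orP[] /eqP->.
Qed.

Lemma matching_number_delete_vertex e e' x :
  (forall u v, e u v -> u != x -> v != x -> e' u v) ->
  (matching_number e <= (matching_number e').+1)%N.
Proof.
move=> ee'; have [M HM <-] := matching_numberP e.
pose Mx := [set E in M | x \in E]; pose M' := [set E in M | x \notin E].
have HM' : is_matching e' M'.
  apply/andP; split; apply/forall_inP => E; rewrite inE => /andP[EM xE].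
    have [u [v [uv euv defE]]] := matching_edge HM EM.
    move: xE; rewrite defE !inE negb_or => /andP[ux vx].
    apply/existsP; exists u; apply/existsP; exists v.
    by rewrite uv ee' 1?eq_sym // eqxx.
  apply/forall_inP => F; rewrite inE => /andP[FM _].
  by apply/implyP; apply: matching_disjoint HM EM FM.
have Mx_le1 : (#|Mx| <= 1)%N.
  rewrite leqNgt; apply/negP => /card_gt1P[E [F [+ + EF]]].
  rewrite !inE => /andP[EM xE] /andP[FM xF].
  by rewrite (disjointFr (matching_disjoint HM EM FM EF) xE) in xF.
have sub_M : M \subset Mx :|: M'.
  by apply/subsetP => E EM; rewrite !inE EM; case: (x \in E).
apply: leq_trans (subset_leq_card sub_M) _.
apply: leq_trans (leq_card_setU _ _).1 _.
by rewrite -add1n leq_add // leq_matching_number.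
Qed.

Lemma matching_number_add_edge e M x y :
  is_matching e M -> x \notin cover M -> y \notin cover M -> x != y -> e x y ->
  (#|M| < matching_number e)%N.
Proof.
move=> HM xM yM xy exy.
have uncovered z E : z \notin cover M -> E \in M -> z \notin E.
  by move=> zM EM; apply: contra zM => zE; apply/bigcupP; exists E.
have xyM : [set x; y] \notin M.
  by apply: contra xM => xyM; apply/bigcupP; exists [set x; y]; rewrite ?set21.
have disj_new F : F \in M -> [disjoint [set x; y] & F].
  move=> FM; rewrite disjoint_subset; apply/subsetP => z.
  by rewrite !inE => /orP[] /eqP->; rewrite uncovered.
suff HM2 : is_matching e ([set x; y] |: M).
  by have := leq_matching_number HM2; rewrite cardsU1 xyM.
apply/andP; split; apply/forall_inP => E /setU1P[-> | EM].
- by apply/existsP; exists x; apply/existsP; exists y; rewrite xy exy eqxx.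
- by have [u [v [uv euv ->]]] := matching_edge HM EM;
    apply/existsP; exists u; apply/existsP; exists v; rewrite uv euv eqxx.
- apply/forall_inP => F /setU1P[-> | FM]; first by rewrite eqxx.
  by rewrite disj_new ?implybT.
- apply/forall_inP => F /setU1P[-> | FM].
    by rewrite disjoint_sym disj_new ?implybT.
  by apply/implyP; apply: matching_disjoint HM EM FM.
Qed.

End Matchings.

Definition excess (r : seq bool) (k : nat) : int :=
  (count negb (take k r))%:Z - (count id (take k r))%:Z.

(* The maximum of [excess r k] over k; the truncated predecessor accounts for
   the empty prefix, whose excess 0 may exceed all the others. *)
Fixpoint max_excess (r : seq bool) : nat :=
  if r is b :: r' then (if b then (max_excess r').-1 else (max_excess r').+1)
  else 0%N.

Lemma excess_le_max r k : excess r k <= (max_excess r)%:Z.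
Proof.
elim: r k => [|b r IHr] [|k]; rewrite /excess /= ?subrr //.
by have := IHr k; rewrite /excess; case: b => /=; lia.
Qed.

Lemma max_excess_attained r :
  exists2 k, (k <= size r)%N & excess r k = (max_excess r)%:Z.
Proof.
elim: r => [|b r [k kr IHr]]; first by exists 0%N.
case: b => /=; last by exists k.+1 => //; move: IHr; rewrite /excess /=; lia.
have [max0 | max_gt0] := posnP (max_excess r).
  by exists 0%N; rewrite // max0.
by exists k.+1 => //; move: IHr; rewrite /excess /=; lia.
Qed.

Lemma hseq_max_excess s : hseq s = (max_excess (rev s))%:Z.
Proof.
have tail_excess k : (zk s k)%:Z - (uk s k)%:Z = excess (rev s) k.
  by rewrite /excess take_rev !count_rev.
rewrite /hseq tail_excess; under eq_bigr => k _ do rewrite tail_excess.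
apply/le_anti/andP; split.
  by apply/bigmax_leP; split=> [|k _]; apply: excess_le_max.
have [k + <-] := max_excess_attained (rev s); rewrite size_rev -ltnS => ks.
exact: (@le_bigmax_cond _ _ _ _ (Ordinal ks) xpredT
  (fun i : 'I_ _ => excess (rev s) i)).
Qed.

Section ThresholdPrefix.

Variables (n : nat) (s : seq bool).

Definition tg_prefix (k : nat) : rel 'I_n :=
  fun i j => [&& @tg_adj n s i j, (i <= k)%N & (j <= k)%N].

Local Notation nu k := (matching_number (tg_prefix k)).

Lemma card_ord_le k : (k < n)%N -> #|[set i : 'I_n | (i <= k)%N]| = k.+1.
Proof.
move=> kn; have widen_inj : injective (widen_ord kn).
  by move=> i j /(congr1 val) ij; apply: val_inj.
suff -> : [set i : 'I_n | (i <= k)%N] = widen_ord kn @: [set: 'I_k.+1].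
  by rewrite card_imset // cardsT card_ord.
apply/setP => i; rewrite inE; apply/idP/imsetP => [ik | [j _ ->]].
  by exists (Ordinal (ik : (i < k.+1)%N)) => //; apply: val_inj.
by rewrite /= -ltnS.
Qed.

Lemma tg_prefix_le k u v : tg_prefix k u v -> (u <= k)%N && (v <= k)%N.
Proof. by case/and3P=> _ -> ->. Qed.

Lemma nu_prefix_half k : (k < n)%N -> (2 * nu k <= k.+1)%N.
Proof.
move=> kn; rewrite -(card_ord_le kn).
by apply: matching_number_le_support => u v /tg_prefix_le; rewrite !inE.
Qed.

Lemma tg_prefix_sub k : subrel (tg_prefix k) (tg_prefix k.+1).
Proof. by move=> u v /and3P[adj_uv uk vk]; rewrite /tg_prefix adj_uv !leqW. Qed.

Lemma tg_prefix_isolated k : ~~ nth false s k -> tg_prefix k.+1 =2 tg_prefix k.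
Proof.
move=> sk u v; apply/idP/idP => [|/tg_prefix_sub //].
case/and3P; rewrite /tg_adj => /andP[uv adj_uv] uk vk.
rewrite /tg_prefix /tg_adj uv adj_uv.
rewrite -geq_max; apply: contraTT adj_uv => max_gt.
by have -> : maxn u v = k.+1 by lia.
Qed.

Lemma nu_prefix_succ_le k : (k.+1 < n)%N -> (nu k.+1 <= (nu k).+1)%N.
Proof.
move=> kn; apply: (matching_number_delete_vertex (x := Ordinal kn)) => u v.
case/and3P=> adj_uv uk vk; rewrite -!val_eqE /= => ukn vkn.
by rewrite /tg_prefix adj_uv /=; lia.
Qed.

Lemma nu_prefix_succ_dominating k : (k.+1 < n)%N -> nth false s k ->
  (2 * nu k < k.+1)%N -> (nu k < nu k.+1)%N.
Proof.
move=> kn sk nu_lt; have [M HM defM] := matching_numberP (tg_prefix k).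
pose y := Ordinal kn.
have [x xk xM] : exists2 x : 'I_n, (x <= k)%N & x \notin cover M.
  apply/exists_inP; rewrite -negb_forall_in.
  apply: contraL nu_lt => /forall_inP leM.
  rewrite -leqNgt -defM -(card_cover_matching HM) -(card_ord_le (ltnW kn)).
  by apply/subset_leq_card/subsetP => i; rewrite inE; apply: leM.
have yM : y \notin cover M.
  apply/bigcupP => -[E EM].
  have [u [v [_ /tg_prefix_le/andP[uk vk] ->]]] := matching_edge HM EM.
  by rewrite !inE -!val_eqE /= => /orP[] /eqP ky; lia.
have xy : x != y by rewrite -val_eqE /= neq_ltn ltnS xk.
have adj_xy : tg_prefix k.+1 x y.
  by rewrite /tg_prefix /tg_adj xy /= (maxn_idPr (leqW xk)) sk (leqW xk) ltnSn.
have HM' := sub_matching (@tg_prefix_sub k) HM.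
by rewrite -defM (matching_number_add_edge HM' xM yM xy).
Qed.

Hypothesis size_s : size s = n.-1.

Lemma nu_prefix_invariant k : (k < n)%N ->
  (2 * nu k + max_excess (rev (take k s)) <= k.+1
    <= 2 * nu k + max_excess (rev (take k s)) + 1)%N.
Proof.
elim: k => [n_gt0 | k IHk kn].
  by rewrite take0 /=; have := nu_prefix_half n_gt0; lia.
have ks : (k < size s)%N by rewrite size_s; lia.
have {IHk} := IHk (ltnW kn); rewrite (take_nth false ks) rev_rcons /=.
case sk : (nth false s k) => /=; last first.
  by rewrite (eq_matching_number (tg_prefix_isolated (negbT sk))); lia.
have := nu_prefix_succ_le kn; have := nu_prefix_half kn.
have := nu_prefix_succ_dominating kn sk.
have := matching_number_sub (@tg_prefix_sub k).
lia.
Qed.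

End ThresholdPrefix.

Lemma divz_between (m d q : int) :
  0 < d -> q * d <= m < q * d + d -> (m %/ d)%Z = q.
Proof.
move=> d_gt0 bounds; have -> : m = q * d + (m - q * d) by rewrite addrC subrK.
rewrite divzMDl ?gt_eqF // divz_small ?addr0 // abszE gtr0_norm //; lia.
Qed.

Theorem mainTheorem6 (n : nat) (s : seq bool) :
  (1 <= n)%N -> size s = n.-1 ->
  (matching_number (@tg_adj n s))%:Z = ((n%:Z - hseq s) %/ 2)%Z.
Proof.
move=> n_gt0 size_s; have last_lt : (n.-1 < n)%N by rewrite prednK.
have take_all : take n.-1 s = s by rewrite -size_s take_size.
have := nu_prefix_invariant size_s last_lt; rewrite take_all prednK //.
have -> : matching_number (@tg_prefix n s n.-1) = matching_number (@tg_adj n s).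
  have le_last (i : 'I_n) : (i <= n.-1)%N by rewrite -ltnS prednK.
  by apply: eq_matching_number => u v; rewrite /tg_prefix !le_last !andbT.
rewrite hseq_max_excess => bounds; apply/esym/divz_between => //; lia.
Qed.
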